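(* For each $i\in\{1,2,3,4\}$ and any right-hand side, GMRES applied (in exact arithmetic) to the preconditioned system $\mathcal{M}_i^{-1}\mathcal{A}\mathbf{x}=\mathcal{M}_i^{-1}\tilde b$ terminates with the exact solution in at most $n+q+1$ iterations.
   Context: Let $A_1\in\mathbb{R}^{p\times n}$ have full column rank and $A_2\in\mathbb{R}^{q\times n}$; let $b_1\in\mathbb{R}^p$, $b_2\in\mathbb{R}^q$. Set $P=A_1^TA_1$, assume $P-A_2^TA_2$ is symmetric positive definite (so $\mathcal{A}$ below is nonsingular), and let $\hat P\in\mathbb{R}^{n\times n}$ be symmetric positive definite. Define $\mathcal{A}=\begin{pmatrix}I_p&A_1&0\\0&P&A_2^T\\0&A_2&I_q\end{pmatrix}$, $\tilde b=(b_1;A_1^Tb_1;b_2)$, $\mathcal{M}_1=\begin{pmatrix}I_p&0&0\\0&\hat P&0\\0&0&I_q\end{pmatrix}$, $\mathcal{M}_2=\begin{pmatrix}I_p&0&0\\0&\hat P&A_2^T\\0&0&I_q\end{pmatrix}$, $\mathcal{M}_3=\begin{pmatrix}I_p&A_1&0\\0&\hat P&0\\0&0&I_q\end{pmatrix}$, $\mathcal{M}_4=\begin{pmatrix}I_p&A_1&0\\0&\hat P&A_2^T\\0&0&I_q\end{pmatrix}$. *)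

From HB Require Import structures.
From mathcomp Require Import all_boot all_order all_algebra.
Set Implicit Arguments. Unset Strict Implicit. Unset Printing Implicit Defensive.
Import Order.TTheory GRing.Theory Num.Theory.
Local Open Scope ring_scope.

Definition spd (R : realFieldType) (m : nat) (M : 'M[R]_m) : Prop :=
  M^T = M /\ forall x : 'cV[R]_m, x != 0 -> 0 < (x^T *m M *m x) 0 0.

Definition calA (R : realFieldType) (p n q : nat)
  (A1 : 'M[R]_(p, n)) (A2 : 'M[R]_(q, n)) : 'M[R]_(p + (n + q)) :=
  block_mx 1%:M (row_mx A1 0) 0 (block_mx (A1^T *m A1) A2^T A2 1%:M).

Definition btilde (R : realFieldType) (p n q : nat)
  (A1 : 'M[R]_(p, n)) (b1 : 'cV[R]_p) (b2 : 'cV[R]_q) : 'cV[R]_(p + (n + q)) :=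
  col_mx b1 (col_mx (A1^T *m b1) b2).

Definition calM (R : realFieldType) (p n q : nat)
  (A1 : 'M[R]_(p, n)) (A2 : 'M[R]_(q, n)) (Ph : 'M[R]_n) (i : nat)
  : 'M[R]_(p + (n + q)) :=
  match i with
  | 1 => block_mx 1%:M 0 0 (block_mx Ph 0 0 1%:M)
  | 2 => block_mx 1%:M 0 0 (block_mx Ph A2^T 0 1%:M)
  | 3 => block_mx 1%:M (row_mx A1 0) 0 (block_mx Ph 0 0 1%:M)
  | _ => block_mx 1%:M (row_mx A1 0) 0 (block_mx Ph A2^T 0 1%:M)
  end.

Definition krylov_vec (R : ringType) (m : nat) (T : 'M[R]_m) (r : 'cV[R]_m)
  (j : nat) : 'cV[R]_m := iter j (mulmx T) r.

(* The k-th GMRES iterate for T x = c with initial guess x0 minimizes the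
   residual 2-norm over x0 + K_k(T, r0), r0 = c - T x0.  It is the exact
   solution iff the minimal residual is zero, i.e. iff some element of
   x0 + K_k(T, r0) solves the system exactly. *)
Definition gmres_exact_at (R : realFieldType) (m : nat) (T : 'M[R]_m)
  (c x0 : 'cV[R]_m) (k : nat) : Prop :=
  exists a : 'I_k -> R,
    T *m (x0 + \sum_(j < k) a j *: krylov_vec T (c - T *m x0) j) = c.

From HB Require Import structures.
From mathcomp Require Import all_boot all_order all_algebra.
Import Order.TTheory GRing.Theory Num.Theory.
Local Open Scope ring_scope.

(* Both M_i and A are block upper triangular with an identity leading block
   of size p, hence so is T := M_i^-1 A, and its trailing block S is
   nonsingular because A is (its Schur complement A1^T A1 - A2^T A2 is
   positive definite).  By Cayley-Hamilton the polynomial (X - 1) char_poly S,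
   of degree n + q + 1, annihilates every vector under T, and its constant
   term is det S up to sign, hence nonzero.  Dividing this relation for the
   initial residual by the constant term exhibits the exact solution in
   x0 + K_(n+q+1)(T, r0). *)

Section PolyActionOnKrylovVectors.
Variable R : comNzRingType.
Set Implicit Arguments.

(* [f(T) v], spelled with Krylov vectors so that it also makes sense for
   [m = 0], where [horner_mx] is not available. *)
Definition horner_mxv (m : nat) (T : 'M[R]_m) (f : {poly R}) (v : 'cV[R]_m)
  : 'cV[R]_m :=
  \sum_(i < size f) f`_i *: krylov_vec T v i.

Lemma krylov_vecE (m : nat) (T : 'M[R]_m) (v : 'cV[R]_m) i :
  krylov_vec T v i = T ^+ i *m v.
Proof.
elim: i => [|i IH]; first by rewrite expr0 mul1mx.
by rewrite /= -/(krylov_vec T v i) IH exprS mulmxA.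
Qed.

Lemma horner_mxv_widen (m d : nat) (T : 'M[R]_m) (f : {poly R})
    (v : 'cV[R]_m) :
  (size f <= d)%N ->
  horner_mxv T f v = \sum_(i < d) f`_i *: krylov_vec T v i.
Proof.
move=> le_fd; rewrite /horner_mxv.
rewrite (big_ord_widen d (fun i => f`_i *: krylov_vec T v i) le_fd).
rewrite big_mkcond /=.
apply: eq_bigr => i _; case: ltnP => // le_fi.
by rewrite nth_default ?scale0r.
Qed.

Lemma horner_mxvB (m : nat) (T : 'M[R]_m) (f g : {poly R}) (v : 'cV[R]_m) :
  horner_mxv T (f - g) v = horner_mxv T f v - horner_mxv T g v.
Proof.
pose d := maxn (size f) (size g).
rewrite !(horner_mxv_widen d) ?leq_maxl ?leq_maxr //; last first.
  by rewrite (leq_trans (size_polyD _ _)) ?size_polyN.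
by rewrite -sumrB; apply: eq_bigr => i _; rewrite coefB scalerBl.
Qed.

Lemma size_mulX_leq (f : {poly R}) : (size (f * 'X)%R <= (size f).+1)%N.
Proof. by rewrite (leq_trans (size_polyMleq _ _)) // size_polyX addn2. Qed.

Lemma horner_mxv_mulX (m : nat) (T : 'M[R]_m) (f : {poly R}) (v : 'cV[R]_m) :
  horner_mxv T (f * 'X) v = T *m horner_mxv T f v.
Proof.
rewrite (horner_mxv_widen (size f).+1) ?size_mulX_leq //.
rewrite big_ord_recl coefMX /= scale0r add0r mulmx_sumr.
by apply: eq_bigr => i _; rewrite coefMX /= scalemxAr.
Qed.

Lemma horner_mxv_char_poly (m : nat) (T : 'M[R]_m) (v : 'cV[R]_m) :
  horner_mxv T (char_poly T) v = 0.
Proof.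
case: m T v => [|m] T v; first by rewrite flatmx0.
rewrite /horner_mxv; under eq_bigr do rewrite krylov_vecE scalemxAl.
rewrite -mulmx_suml.
suff -> : \sum_(i < size (char_poly T)) (char_poly T)`_i *: T ^+ i
        = horner_mx T (char_poly T) by rewrite Cayley_Hamilton mul0mx.
rewrite /horner_mx /horner_morph horner_coef size_map_poly_id0; last first.
  by rewrite (monicP (char_poly_monic T)) oner_neq0.
by apply: eq_bigr => i _; rewrite coef_map /= -mulmxE mul_scalar_mx.
Qed.

Lemma dsubmx_horner_mxv (m k : nat) (B : 'M[R]_(m, k)) (S : 'M[R]_k)
    (f : {poly R}) (v : 'cV[R]_(m + k)) :
  dsubmx (horner_mxv (block_mx 1%:M B 0 S) f v) = horner_mxv S f (dsubmx v).
Proof.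
have dsubmx_krylov i :
    dsubmx (krylov_vec (block_mx 1%:M B 0 S) v i) = krylov_vec S (dsubmx v) i.
  elim: i => [|i IH] //=; rewrite -IH.
  rewrite -[X in block_mx _ _ _ _ *m X]vsubmxK mul_block_col.
  by rewrite col_mxKd mul0mx add0r.
rewrite /horner_mxv linear_sum; apply: eq_bigr => i _.
by rewrite linearZ /= dsubmx_krylov.
Qed.

(* On a block unitriangular matrix, ['X - 1] annihilates every vector with
   vanishing lower block, so [('X - 1) f] kills [v] as soon as [f(S)] kills
   the lower block of [v]. *)
Lemma horner_mxv_ublock1_annihilator (m k : nat) (B : 'M[R]_(m, k))
    (S : 'M[R]_k) (f : {poly R}) (v : 'cV[R]_(m + k)) :
  horner_mxv S f (dsubmx v) = 0 ->
  horner_mxv (block_mx 1%:M B 0 S) (f * 'X - f) v = 0.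
Proof.
move=> fS0; set u := horner_mxv (block_mx 1%:M B 0 S) f v.
have du0 : dsubmx u = 0 by rewrite dsubmx_horner_mxv.
rewrite horner_mxvB horner_mxv_mulX -/u -[u]vsubmxK du0 mul_block_col.
by rewrite mul1mx !mulmx0 mul0mx !addr0 subrr.
Qed.

End PolyActionOnKrylovVectors.

Section GMRESTermination.
Variable R : realFieldType.
Set Implicit Arguments.

(* If [f(T) r0 = 0] with [f(0) != 0], dividing by [f(0)] expresses [r0] as
   [T] applied to a vector of [K_(size f - 1)(T, r0)]. *)
Lemma gmres_exact_at_annihilator (m d : nat) (T : 'M[R]_m) (c x0 : 'cV[R]_m)
    (f : {poly R}) :
  f`_0 != 0 -> (size f <= d.+1)%N ->
  horner_mxv T f (c - T *m x0) = 0 ->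
  gmres_exact_at T c x0 d.
Proof.
move=> f0 le_fd; set r := c - T *m x0.
rewrite (horner_mxv_widen d.+1) // big_ord_recl => /eqP.
rewrite addrC addr_eq0 => /eqP fT.
exists (fun j : 'I_d => - (f`_j.+1 / f`_0)).
rewrite mulmxDr mulmx_sumr.
have -> : \sum_(j < d) T *m (- (f`_j.+1 / f`_0) *: krylov_vec T r j)
        = - (f`_0)^-1 *:
            \sum_(j < d) f`_(lift ord0 j) *: krylov_vec T r (lift ord0 j).
  rewrite scaler_sumr; apply: eq_bigr => j _.
  by rewrite -scalemxAr scalerA mulrC mulNr.
by rewrite fT /= scalerN scaleNr opprK scalerA mulVf // scale1r addrC subrK.
Qed.

Lemma spd_det_neq0 (m : nat) (Q : 'M[R]_m) : spd Q -> \det Q != 0.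
Proof.
case=> _ Qpos; apply/negP => /det0P [v v_neq0 vQ].
have vT_neq0 : v^T != 0 by rewrite -trmx0 (inj_eq trmx_inj).
by have := Qpos _ vT_neq0; rewrite trmxK vQ mul0mx mxE ltxx.
Qed.

Lemma ublock1_of_mulmx_ublock1 (m k : nat) (B E : 'M[R]_(m, k)) (D F : 'M[R]_k)
    (T : 'M[R]_(m + k)) :
  \det D != 0 -> block_mx 1%:M B 0 D *m T = block_mx 1%:M E 0 F ->
  T = block_mx 1%:M (ursubmx T) 0 (drsubmx T).
Proof.
move=> detD; rewrite -{1}[T]submxK mulmx_block => /eq_block_mx [Tul _ Tdl _].
rewrite !mul0mx !add0r in Tdl.
have T_dl0 : dlsubmx T = 0.
  have D_unit : D \in unitmx by rewrite unitmxE unitfE.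
  by rewrite -(mulKmx D_unit (dlsubmx T)) Tdl mulmx0.
rewrite T_dl0 mulmx0 addr0 mul1mx in Tul.
by rewrite -{1}[T]submxK Tul T_dl0.
Qed.

(* Block elimination with the Schur complement [A1^T A1 - A2^T A2]. *)
Lemma det_calA_neq0 (p n q : nat) (A1 : 'M[R]_(p, n)) (A2 : 'M[R]_(q, n)) :
  spd (A1^T *m A1 - A2^T *m A2) -> \det (calA A1 A2) != 0.
Proof.
move=> /spd_det_neq0 detQ; rewrite /calA det_ublock det1 mul1r.
have -> : block_mx (A1^T *m A1) A2^T A2 1%:M =
    block_mx 1%:M A2^T 0 1%:M *m block_mx (A1^T *m A1 - A2^T *m A2) 0 A2 1%:M.
  by rewrite mulmx_block !mul1mx !mul0mx !mulmx1 !add0r subrK.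
by rewrite det_mulmx det_ublock det_lblock !det1 !mul1r mulr1.
Qed.

Lemma gmres_exact_ublock1_preconditioner (p n q : nat)
    (A1 : 'M[R]_(p, n)) (A2 : 'M[R]_(q, n)) (b1 : 'cV[R]_p) (b2 : 'cV[R]_q)
    (x0 : 'cV[R]_(p + (n + q))) (B : 'M[R]_(p, n + q)) (D : 'M[R]_(n + q)) :
  spd (A1^T *m A1 - A2^T *m A2) -> \det D != 0 ->
  let M := block_mx 1%:M B 0 D in
  gmres_exact_at (invmx M *m calA A1 A2) (invmx M *m btilde A1 b1 b2) x0
    (n + q).+1.
Proof.
move=> detQ detD M.
have M_unit : M \in unitmx by rewrite unitmxE unitfE det_ublock det1 mul1r.
set T := invmx M *m calA A1 A2.
have MT : M *m T = calA A1 A2 by rewrite /T mulKVmx.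
have T_ublock1 := ublock1_of_mulmx_ublock1 detD MT.
set S := drsubmx T.
have detS : \det S != 0.
  have : \det T != 0.
    rewrite det_mulmx det_inv mulf_neq0 ?det_calA_neq0 //.
    by rewrite invr_eq0 -unitfE -unitmxE.
  by rewrite T_ublock1 det_ublock det1 mul1r.
clearbody T.
apply: (@gmres_exact_at_annihilator _ _ _ _ _ (char_poly S * 'X - char_poly S)).
- rewrite coefB coefMX eqxx sub0r oppr_eq0 char_poly_det.
  by rewrite mulf_neq0 ?signr_eq0.
- rewrite (leq_trans (size_polyD _ _)) // size_polyN geq_max size_char_poly.
  by rewrite leqnSn andbT (leq_trans (size_mulX_leq _)) ?size_char_poly.
- by rewrite T_ublock1 horner_mxv_ublock1_annihilator ?horner_mxv_char_poly.
Qed.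

End GMRESTermination.

Theorem corollary2 (R : realFieldType) (p n q : nat)
  (A1 : 'M[R]_(p, n)) (A2 : 'M[R]_(q, n)) (Ph : 'M[R]_n)
  (b1 : 'cV[R]_p) (b2 : 'cV[R]_q) (x0 : 'cV[R]_(p + (n + q))) (i : nat) :
  \rank A1 = n ->
  spd (A1^T *m A1 - A2^T *m A2) ->
  spd Ph ->
  (1 <= i <= 4)%N ->
  let M := calM A1 A2 Ph i in
  exists k : nat, (k <= n + q + 1)%N /\
    gmres_exact_at (invmx M *m calA A1 A2) (invmx M *m btilde A1 b1 b2) x0 k.
Proof.
move=> _ detQ /spd_det_neq0 detPh i_range M.
exists (n + q).+1; split; first by rewrite addn1.
have detD1 : \det (block_mx Ph 0 0 1%:M : 'M[R]_(n + q)) != 0.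
  by rewrite det_ublock det1 mulr1.
have detD2 : \det (block_mx Ph A2^T 0 1%:M : 'M[R]_(n + q)) != 0.
  by rewrite det_ublock det1 mulr1.
rewrite {}/M /calM; case: i i_range => [|[|[|[|[|i]]]]] // _;
  exact: gmres_exact_ublock1_preconditioner.
Qed.
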